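(* Let $D$ be a core digraph without non-trivial automorphisms such that the almost-sure theory of the class of $D$-coloured digraphs equals the theory of $C_D$. Then asymptotically almost surely, a graph from $\mathrm{Csp}(D)$ has exactly one homomorphism to $D$.
   Context: $D$ is a finite digraph. $\mathrm{Csp}(D)$ is the class of all finite digraphs with a homomorphism to $D$. A $D$-coloured digraph is a digraph $G$ with unary predicates $P_u$ ($u \in V(D)$) such that each vertex lies in exactly one $P_u$ and the map sending $x \in P_u$ to $u$ is a homomorphism $G \to D$. $C_D$ is the (unique up to isomorphism) countable homogeneous $D$-coloured digraph whose finite substructures are exactly the finite $D$-coloured digraphs. A core is a finite digraph all of whose endomorphisms are automorphisms. Random graphs are drawn uniformly from those with vertex set $\{1,\dots,n\}$. *)

From mathcomp Require Import all_boot all_algebra.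
From mathcomp Require Import boolp.
From Stdlib Require List.
Set Implicit Arguments. Unset Strict Implicit. Unset Printing Implicit Defensive.
Import GRing.Theory Num.Theory.

Definition dhom (V : finType) (ED : rel V) (f : V -> V) : Prop :=
  forall x y, ED x y -> ED (f x) (f y).

Definition daut (V : finType) (ED : rel V) (f : V -> V) : Prop :=
  bijective f /\ forall x y, ED x y = ED (f x) (f y).

Definition is_core (V : finType) (ED : rel V) : Prop :=
  forall f : V -> V, dhom ED f -> daut ED f.

Definition trivial_aut (V : finType) (ED : rel V) : Prop :=
  forall f : V -> V, daut ED f -> forall x, f x = x.

Definition digraph (n : nat) := {ffun 'I_n * 'I_n -> bool}.

Definition is_hom (V : finType) (ED : rel V) n (G : digraph n) (h : {ffun 'I_n -> V}) : bool :=
  [forall x, [forall y, G (x, y) ==> ED (h x) (h y)]].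

Inductive fo (V : Type) : Type :=
| FEq  : nat -> nat -> fo V
| FE   : nat -> nat -> fo V
| FP   : V -> nat -> fo V
| FBot : fo V
| FNeg : fo V -> fo V
| FAnd : fo V -> fo V -> fo V
| FOr  : fo V -> fo V -> fo V
| FImp : fo V -> fo V -> fo V
| FEx  : nat -> fo V -> fo V
| FAll : nat -> fo V -> fo V.

Fixpoint fv (V : Type) (phi : fo V) : seq nat :=
  match phi with
  | FEq i j => [:: i; j]
  | FE i j => [:: i; j]
  | FP _ i => [:: i]
  | FBot => [::]
  | FNeg p => fv p
  | FAnd p q => fv p ++ fv q
  | FOr p q => fv p ++ fv q
  | FImp p q => fv p ++ fv q
  | FEx i p => [seq k <- fv p | k != i]
  | FAll i p => [seq k <- fv p | k != i]
  end.

Definition sentence (V : Type) (phi : fo V) : Prop := fv phi = [::].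

Definition upd (A : Type) (env : nat -> A) (i : nat) (a : A) : nat -> A :=
  fun k => if k == i then a else env k.

(* Satisfaction in a D-coloured structure (A, E, col): x lies in P_u iff col x = u. *)
Fixpoint sat (V A : Type) (E : A -> A -> Prop) (col : A -> V)
    (env : nat -> A) (phi : fo V) : Prop :=
  match phi with
  | FEq i j => env i = env j
  | FE i j => E (env i) (env j)
  | FP u i => col (env i) = u
  | FBot => False
  | FNeg p => ~ sat E col env p
  | FAnd p q => sat E col env p /\ sat E col env q
  | FOr p q => sat E col env p \/ sat E col env q
  | FImp p q => sat E col env p -> sat E col env q
  | FEx i p => exists a : A, sat E col (upd env i a) p
  | FAll i p => forall a : A, sat E col (upd env i a) p
  end.

Definition models (V A : Type) (E : A -> A -> Prop) (col : A -> V) (phi : fo V) : Prop :=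
  forall env : nat -> A, sat E col env phi.

(* Probability that a uniformly random D-coloured digraph on {1..n} satisfies phi. *)
Definition prob_col (V : finType) (ED : rel V) (phi : fo V) (n : nat) : rat :=
  (#|[set p : digraph n * {ffun 'I_n -> V} |
        is_hom ED p.1 p.2 && `[< models (fun x y => p.1 (x, y) : Prop) p.2 phi >]]|%:R
   / #|[set p : digraph n * {ffun 'I_n -> V} | is_hom ED p.1 p.2]|%:R)%R.

(* Probability that a uniformly random digraph on {1..n} in Csp(D)
   has exactly one homomorphism to D. *)
Definition prob_unique_hom (V : finType) (ED : rel V) (n : nat) : rat :=
  (#|[set G : digraph n | #|[set h : {ffun 'I_n -> V} | is_hom ED G h]| == 1%N]|%:R
   / #|[set G : digraph n | [exists h : {ffun 'I_n -> V}, is_hom ED G h]]|%:R)%R.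

(* p n -> 1 as n -> oo (p n <= 1 always for the probabilities above). *)
Definition tends_to_one (p : nat -> rat) : Prop :=
  forall eps : rat, (0 < eps)%R -> exists N : nat, forall n : nat, (N <= n)%N -> (1 - eps <= p n)%R.

(* (A, EC, colC) is a countable homogeneous D-coloured digraph whose finite
   substructures are exactly the finite D-coloured digraphs. *)
Definition is_CD (V : finType) (ED : rel V) (A : Type) (EC : A -> A -> Prop)
    (colC : A -> V) : Prop :=
  (exists f : A -> nat, injective f) /\
  (forall x y, EC x y -> ED (colC x) (colC y)) /\
  (forall n (G : digraph n) (c : {ffun 'I_n -> V}), is_hom ED G c ->
     exists emb : 'I_n -> A, injective emb /\
       (forall x y, G (x, y) <-> EC (emb x) (emb y)) /\
       (forall x, colC (emb x) = c x)) /\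
  (* homogeneous: every isomorphism between finite substructures extends to an automorphism *)
  (forall (s : seq A) (f : A -> A),
     (forall x y, List.In x s -> List.In y s -> f x = f y -> x = y) ->
     (forall x y, List.In x s -> List.In y s -> (EC x y <-> EC (f x) (f y))) ->
     (forall x, List.In x s -> colC (f x) = colC x) ->
     exists g : A -> A, bijective g /\
       (forall x y, EC x y <-> EC (g x) (g y)) /\
       (forall x, colC (g x) = colC x) /\
       (forall x, List.In x s -> g x = f x)).

From mathcomp Require Import all_boot all_algebra.
From mathcomp Require Import boolp order.
Set Implicit Arguments. Unset Strict Implicit. Unset Printing Implicit Defensive.
Import Order.TTheory GRing.Theory Num.Theory.

(* Let psi say that every vertex x lies on a coloured copy of D: there are
   vertices y_v (v in D) of colour v with y_v -> y_w whenever v -> w in D, and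
   x is one of them.  If (G, c) satisfies psi and g : G -> D, then v |-> g y_v
   is an endomorphism of the core D, hence an automorphism, hence the
   identity; so g x = g y_v = v = c y_v = c x, i.e. c is the only
   homomorphism.  By homogeneity C_D satisfies psi (a core with a loop is a
   single vertex and needs no argument), so almost all D-coloured digraphs
   satisfy psi.  Forgetting the colouring is injective on those and maps them
   into the graphs with a unique homomorphism, while every graph of Csp(D)
   carries a colouring; hence the probability of a unique homomorphism is at
   least the probability of psi. *)

Definition FTop (V : Type) : fo V := FNeg (FBot V).

Fixpoint fo_bigand (V T : Type) (s : seq T) (F : T -> fo V) : fo V :=
  if s is t :: s' then FAnd (F t) (fo_bigand s' F) else FTop V.

Fixpoint fo_bigor (V T : Type) (s : seq T) (F : T -> fo V) : fo V :=
  if s is t :: s' then FOr (F t) (fo_bigor s' F) else FBot V.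

Fixpoint fo_exists (V : Type) (vs : seq nat) (phi : fo V) : fo V :=
  if vs is i :: vs' then FEx i (fo_exists vs' phi) else phi.

Section Satisfaction.
Variables (V A : Type) (E : A -> A -> Prop) (col : A -> V).

Lemma sat_bigand env (T : eqType) (s : seq T) F :
  sat E col env (fo_bigand s F) <-> {in s, forall t, sat E col env (F t)}.
Proof.
elim: s => [|t s IH] /=; first by split=> // _ [].
rewrite IH; split=> [[Ht Hs] u|Hs].
  by rewrite in_cons => /orP[/eqP->|/Hs].
by split=> [|u Hu]; apply: Hs; rewrite inE ?eqxx ?Hu ?orbT.
Qed.

Lemma sat_bigor env (T : eqType) (s : seq T) F :
  sat E col env (fo_bigor s F) <-> exists2 t, t \in s & sat E col env (F t).
Proof.
elim: s => [|t s IH] /=; first by split=> [[]|[t]]; rewrite in_nil.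
rewrite IH; split=> [[Ht|[u Hu Hs]]|[u]].
- by exists t; rewrite ?mem_head.
- by exists u; rewrite // in_cons Hu orbT.
- by rewrite in_cons => /orP[/eqP->|Hu Hs]; [left|right; exists u].
Qed.

Lemma sat_existsI vs phi (env env' : nat -> A) :
  (forall k, k \notin vs -> env' k = env k) -> sat E col env' phi ->
  sat E col env (fo_exists vs phi).
Proof.
elim: vs env => [|i vs IH] env /= agree Hphi.
  by have -> : env = env' by apply: funext => k; rewrite agree.
exists (env' i); apply: IH Hphi => k kvs; rewrite /upd.
by case: eqP => [->//|/eqP ki]; rewrite agree // in_cons negb_or ki.
Qed.

Lemma sat_existsE vs phi (env : nat -> A) :
  sat E col env (fo_exists vs phi) ->
  exists2 env', (forall k, k \notin vs -> env' k = env k) & sat E col env' phi.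
Proof.
elim: vs env => [|i vs IH] env /=; first by exists env.
case=> a /IH[env' agree Hphi]; exists env' => // k.
by rewrite in_cons negb_or => /andP[ki kvs]; rewrite agree // /upd (negbTE ki).
Qed.

End Satisfaction.

Lemma fv_exists V vs (phi : fo V) : fv (fo_exists vs phi) = [seq k <- fv phi | k \notin vs].
Proof.
elim: vs => [|i vs IH] /=; first by rewrite filter_predT.
by rewrite IH -filter_predI; apply: eq_filter => k /=; rewrite in_cons negb_or andbC.
Qed.

Lemma all_fv_bigand V T (P : pred nat) (s : seq T) (F : T -> fo V) :
  (forall t, all P (fv (F t))) -> all P (fv (fo_bigand s F)).
Proof. by move=> HF; elim: s => //= t s IH; rewrite all_cat HF. Qed.

Lemma all_fv_bigor V T (P : pred nat) (s : seq T) (F : T -> fo V) :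
  (forall t, all P (fv (F t))) -> all P (fv (fo_bigor s F)).
Proof. by move=> HF; elim: s => //= t s IH; rewrite all_cat HF. Qed.

Lemma is_homP (V : finType) (ED : rel V) n (G : digraph n) h x y :
  is_hom ED G h -> G (x, y) -> ED (h x) (h y).
Proof. by move=> /forallP /(_ x) /forallP /(_ y) /implyP. Qed.

Section CoveredByCopies.
Variables (V : finType) (ED : rel V).

Definition coloured_copy A (E : A -> A -> Prop) (col : A -> V) (y : V -> A) : Prop :=
  (forall v, col (y v) = v) /\ (forall v w, ED v w -> E (y v) (y w)).

(* Variable 0 is reserved for the covered vertex x; y_v is the variable [var v]. *)
Definition var (v : V) : nat := (index v (enum V)).+1.

Lemma var_inj : injective var.
Proof.
move=> v w [] eq_idx.
by rewrite -(nth_index v (mem_enum V v)) eq_idx nth_index ?mem_enum.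
Qed.

Lemma var_in_vars v : var v \in map var (enum V).
Proof. by rewrite map_f ?mem_enum. Qed.

Definition copy_diagram : fo V :=
  FAnd (fo_bigand (enum V) (fun v => FP v (var v)))
       (fo_bigand [seq e <- enum {: V * V} | ED e.1 e.2]
                  (fun e => FE V (var e.1) (var e.2))).

Definition covered_by_copies : fo V :=
  FAll 0 (fo_exists (map var (enum V))
            (FAnd copy_diagram (fo_bigor (enum V) (fun v => FEq V 0 (var v))))).

Lemma covered_by_copies_sentence : sentence covered_by_copies.
Proof.
rewrite /sentence /= fv_exists -filter_predI; apply/eqP.
rewrite -[_ == _]negbK -has_filter; apply/hasPn; apply/allP.
rewrite /= !all_cat -andbA; apply/and3P; split.
- by apply: all_fv_bigand => v /=; rewrite var_in_vars.
- by apply: all_fv_bigand => e /=; rewrite !var_in_vars.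
- by apply: all_fv_bigor => v /=; rewrite var_in_vars.
Qed.

Lemma sat_copy_diagram A (E : A -> A -> Prop) col env :
  sat E col env copy_diagram <-> coloured_copy E col (env \o var).
Proof.
rewrite /= sat_bigand sat_bigand; split=> [[Hcol Hedge]|[Hcol Hedge]]; split.
- by move=> v; apply: (Hcol v); rewrite mem_enum.
- by move=> v w vw; apply: (Hedge (v, w)); rewrite mem_filter vw mem_enum.
- by move=> v _; apply: Hcol.
- by move=> e; rewrite mem_filter => /andP[/Hedge].
Qed.

Lemma models_coveredP A (E : A -> A -> Prop) col :
  models E col covered_by_copies <->
  forall x, exists2 y, coloured_copy E col y & exists v, y v = x.
Proof.
split=> [Hm x|Hcov env x /=].
  have /sat_existsE[env' agree [/sat_copy_diagram Hy /sat_bigor[v _ /= x_v]]] :=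
    Hm (fun=> x) x.
  exists (env' \o var) => //; exists v; rewrite /= -x_v agree //.
  by apply/mapP=> -[].
have [y Hy [v yv]] := Hcov x.
pose env' k := if [pick w | var w == k] is Some w then y w else upd env 0 x k.
have env'_var w : env' (var w) = y w.
  by rewrite /env'; case: pickP => [u /eqP/var_inj->|/(_ w)]; rewrite ?eqxx.
have env'0 : env' 0 = x.
  by rewrite /env'; case: pickP => [w /eqP //|_]; rewrite /upd eqxx.
apply: (sat_existsI (env' := env')).
  move=> k kvs; rewrite /env'; case: pickP => [w /eqP wk|//].
  by rewrite -wk var_in_vars in kvs.
split; first by apply/sat_copy_diagram; rewrite (funext env'_var : env' \o var = y).
by apply/sat_bigor; exists v; rewrite ?mem_enum //= env'0 env'_var yv.
Qed.

Lemma covered_hom_unique n (G : digraph n) (c g : {ffun 'I_n -> V}) :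
  is_core ED -> trivial_aut ED ->
  models (fun x y => G (x, y) : Prop) c covered_by_copies ->
  is_hom ED G g -> g = c.
Proof.
move=> core triv /models_coveredP Hcov Hg; apply/ffunP => x.
have [y [ycol yedge] [v <-]] := Hcov x.
have gy_hom : dhom ED (g \o y) by move=> u w /yedge /(is_homP Hg).
by rewrite -[g (y v)]/((g \o y) v) (triv _ (core _ gy_hom)) ycol.
Qed.

Section HomogeneousModel.
Variables (A : Type) (EC : A -> A -> Prop) (colC : A -> V).
Hypothesis CD : is_CD ED EC colC.

Lemma CD_coloured_copy : exists y, coloured_copy EC colC y.
Proof.
have [_ [_ [embed _]]] := CD.
pose G : digraph #|V| := [ffun e => ED (enum_val e.1) (enum_val e.2)].
pose c : {ffun 'I_#|V| -> V} := [ffun i => enum_val i].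
have Gc : is_hom ED G c.
  by apply/forallP => i; apply/forallP => j; apply/implyP; rewrite !ffunE.
have [emb [_ [Gemb cemb]]] := embed _ G c Gc.
exists (emb \o enum_rank); split=> [v|v w vw] /=.
  by rewrite cemb ffunE enum_rankK.
by apply/Gemb; rewrite ffunE /= !enum_rankK.
Qed.

(* Without loops in D there are none in C_D, so {z |-> x} is a partial isomorphism. *)
Lemma CD_colour_transitive z x : (forall u, ~~ ED u u) -> colC z = colC x ->
  exists h : A -> A, [/\ forall a b, EC a b -> EC (h a) (h b),
                         forall a, colC (h a) = colC a & h z = x].
Proof.
move=> loopless zx; have [_ [Ehom [_ homogeneous]]] := CD.
have noloop a : ~ EC a a by move=> /Ehom; rewrite (negbTE (loopless _)).
have [|||h [_ [Eh [colh hz]]]] := homogeneous [:: z] (fun=> x).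
- by move=> a b /= [<-|[]] [<-|[]].
- by move=> a b /= [<-|[]] [<-|[]]; split=> /noloop.
- by move=> a /= [<-|[]].
by exists h; split=> [a b /Eh|//|]; last exact: hz (or_introl _).
Qed.

Lemma CD_covered_by_copies : (forall u, ~~ ED u u) -> models EC colC covered_by_copies.
Proof.
move=> loopless; apply/models_coveredP => x.
have [y [ycol yedge]] := CD_coloured_copy.
have [|h [Eh colh hz]] := @CD_colour_transitive (y (colC x)) x loopless.
  exact: ycol.
exists (h \o y); last by exists (colC x).
by split=> [v|v w /yedge /Eh] //=; rewrite colh ycol.
Qed.

End HomogeneousModel.
End CoveredByCopies.

Lemma core_loop_single (V : finType) (ED : rel V) u :
  is_core ED -> ED u u -> forall v, v = u.
Proof.
move=> core uu; have [[g fK _] _] := core (fun=> u) (fun _ _ _ => uu).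
by move=> v; rewrite -(fK v) -(fK u).
Qed.

Lemma ler_nat_ratios (R : numFieldType) (a b c d : nat) :
  (a <= b)%N -> (c <= d)%N -> (0 < a -> 0 < c)%N ->
  (a%:R / d%:R <= b%:R / c%:R :> R)%R.
Proof.
move=> ab cd; case: (posnP a) => [-> _|a_gt0 /(_ isT) c_gt0].
  by rewrite mul0r divr_ge0.
have d_gt0 : (0 < d)%N := leq_trans c_gt0 cd.
rewrite ler_pdivrMr ?ltr0n // mulrAC ler_pdivlMr ?ltr0n //.
by rewrite -!natrM ler_nat leq_mul.
Qed.

Lemma prob_col_le_unique_hom (V : finType) (ED : rel V) (phi : fo V) n :
  (forall (G : digraph n) (c g : {ffun 'I_n -> V}), is_hom ED G c -> is_hom ED G g ->
     models (fun x y => G (x, y) : Prop) c phi -> g = c) ->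
  (prob_col ED phi n <= prob_unique_hom ED n)%R.
Proof.
move=> unique; apply: ler_nat_ratios.
- rewrite -(card_in_imset (f := fst)); last first.
    move=> [G c] [G' c']; rewrite !inE /= => /andP[Gc /asboolP Mc] /andP[Gc' _] GG'.
    by subst G'; rewrite (unique G c c' Gc Gc' Mc).
  apply: subset_leq_card; apply/subsetP => G0 /imsetP[[G c]].
  rewrite inE /= => /andP[Gc /asboolP Mc] ->{G0}; rewrite inE; apply/cards1P.
  exists c; apply/setP => g; rewrite !inE.
  by apply/idP/eqP => [Gg|->//]; apply: unique Gg Mc.
- apply: leq_trans (leq_imset_card fst _); apply: subset_leq_card.
  apply/subsetP => G; rewrite inE => /existsP[h Gh].
  by apply/imsetP; exists (G, h); rewrite ?inE.
- case/card_gt0P => -[G c]; rewrite inE /= => /andP[Gc _].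
  by apply/card_gt0P; exists G; rewrite inE; apply/existsP; exists c.
Qed.

Lemma tends_to_one_le (p q : nat -> rat) :
  (forall n, (p n <= q n)%R) -> tends_to_one p -> tends_to_one q.
Proof.
move=> pq Hp eps eps_gt0; have [N HN] := Hp eps eps_gt0.
by exists N => n Nn; apply: le_trans (HN n Nn) (pq n).
Qed.

Theorem lemma4p15 (V : finType) (ED : rel V) :
  is_core ED ->
  trivial_aut ED ->
  (exists (A : Type) (EC : A -> A -> Prop) (colC : A -> V),
      is_CD ED EC colC /\
      forall phi : fo V, sentence phi ->
        (tends_to_one (prob_col ED phi) <-> models EC colC phi)) ->
  tends_to_one (prob_unique_hom ED).
Proof.
move=> core triv [A [EC [colC [CD almost_sure]]]].
have unique_hom_of phi : sentence phi -> models EC colC phi ->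
    (forall n (G : digraph n) (c g : {ffun 'I_n -> V}), is_hom ED G c ->
       is_hom ED G g -> models (fun x y => G (x, y) : Prop) c phi -> g = c) ->
    tends_to_one (prob_unique_hom ED).
  move=> phi_sentence CD_phi unique.
  apply: (tends_to_one_le (fun n => prob_col_le_unique_hom (unique n))).
  exact/(almost_sure _ phi_sentence).
case: (pickP (fun u => ED u u)) => [u uu|loopless].
  apply: (unique_hom_of (FTop V)) => [//|env /= []|n G c g _ _ _].
  by apply/ffunP => x; rewrite [g x](core_loop_single core uu) [c x](core_loop_single core uu).
apply: (unique_hom_of _ (covered_by_copies_sentence ED)).
  by apply: CD_covered_by_copies => // u; apply/negbT/loopless.
by move=> n G c g _ Gg Mc; apply: covered_hom_unique core triv Mc Gg.
Qed.
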